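(* Let $H\in\mathbb{R}^{n\times n}$ be Hurwitz, and consider the stable LTI (reference) system $\dot x(t)=Hx(t)$, sampled with time step $h>0$, so that the reference trajectory satisfies $x_{ref}(n+1\,|\,k)=e^{Hh}x_{ref}(n\,|\,k)$, with $x_{ref}(0\,|\,k)$ the reference state at time $k$ (hence $x_{ref}(0\,|\,k+1)=x_{ref}(1\,|\,k)$). Consider the quantized system $x_q(k+1)=A_qx_q(k)+hB_qu(k)$, $x_q\in\mathbb{R}^n$, $B_q\in\mathbb{R}^{n\times m}$, $u(k)\in\{-1,0,1\}^m$, controlled by the QS-MPC law: at each time $k$, solve $$\min_{u_{0|k},\dots,u_{N-1|k}} J(x_q(k),U(k))=|x_{N|k}-x_{ref}(N|k)|_P^2+\sum_{n=0}^{N-1}\Big(|x_{n|k}-x_{ref}(n|k)|_Q^2+|u_{n|k}|_R^2\Big)$$ subject to $u_{n|k}\in\{-1,0,1\}^m$, $x_{0|k}=x_q(k)$, $x_{n+1|k}=A_qx_{n|k}+hB_qu_{n|k}$, $x_{ref}(n+1|k)=e^{Hh}x_{ref}(n|k)$ for $n=0,\dots,N-1$, and apply $u(k)=u^*_{0|k}$, the first element of an optimal sequence $U^*(k)$. Here $P,Q,R$ are symmetric positive definite, $N\ge 1$ is the prediction horizon, and $|x|_P^2=x^TPx$. If (a) $A_q=e^{Hh}$, and (b) the symmetric positive definite matrices $P,Q$ satisfy $Q-P+A_q^TPA_q\prec 0$, then the QS-MPC closed-loop solution is asymptotically stable (the quantized system asymptotically emulates the LTI system and converges to its equilibrium).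
   Context: QS-MPC denotes the model predictive control scheme for the quantized system described in the claim, used to emulate the continuous-time LTI system $\dot x=Hx$ (obtained from $\dot x=Ax+Bu$ with stabilizing feedback $u=Kx$, $H=A+BK$). $\prec 0$ means negative definite. The equilibrium of the LTI system is the origin. *)

From HB Require Import structures.
From mathcomp Require Import all_boot all_order all_algebra.
From mathcomp Require Import all_classical all_reals all_analysis.
From mathcomp Require Import complex.
Set Implicit Arguments. Unset Strict Implicit. Unset Printing Implicit Defensive.
Import Order.TTheory GRing.Theory Num.Theory.
Import numFieldNormedType.Exports.
Local Open Scope ring_scope.
Local Open Scope complex_scope.

Section Defs.
Variable R : realType.

Definition expmx (n : nat) (A : 'M[R]_n) : 'M[R]_n :=
  limn (series (fun k : nat => (k`!%:R)^-1 *: A ^+ k)).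

Definition hurwitz (n : nat) (H : 'M[R]_n) : Prop :=
  forall l : R[i], eigenvalue (map_mx (fun x : R => x%:C) H) l -> Re l < 0.

Definition qform (n : nat) (P : 'M[R]_n) (x : 'cV[R]_n) : R :=
  (x^T *m P *m x) 0 0.

Definition sym_mx (n : nat) (P : 'M[R]_n) : Prop := P^T = P.

Definition posdef (n : nat) (P : 'M[R]_n) : Prop :=
  sym_mx P /\ forall x : 'cV[R]_n, x != 0 -> 0 < qform P x.

Definition negdef (n : nat) (M : 'M[R]_n) : Prop :=
  sym_mx M /\ forall x : 'cV[R]_n, x != 0 -> qform M x < 0.

Definition quant_input (m : nat) (u : 'cV[R]_m) : Prop :=
  forall i, u i 0 \in [:: -1; 0; 1].

(** Admissible input sequence over the horizon N (entries beyond N unused). *)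
Definition admissible (m N : nat) (U : nat -> 'cV[R]_m) : Prop :=
  forall j, (j < N)%N -> quant_input (U j).

Fixpoint pred_state (n m : nat) (Aq : 'M[R]_n) (Bq : 'M[R]_(n, m)) (h : R)
  (x0 : 'cV[R]_n) (U : nat -> 'cV[R]_m) (j : nat) : 'cV[R]_n :=
  match j with
  | 0 => x0
  | j'.+1 => Aq *m pred_state Aq Bq h x0 U j' + h *: (Bq *m U j')
  end.

Fixpoint pred_ref (n : nat) (Ad : 'M[R]_n) (xr0 : 'cV[R]_n) (j : nat)
  : 'cV[R]_n :=
  match j with
  | 0 => xr0
  | j'.+1 => Ad *m pred_ref Ad xr0 j'
  end.

Definition mpc_cost (n m N : nat) (Aq : 'M[R]_n) (Bq : 'M[R]_(n, m)) (h : R)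
  (Ad P Q : 'M[R]_n) (Rw : 'M[R]_m) (x0 xr0 : 'cV[R]_n)
  (U : nat -> 'cV[R]_m) : R :=
  qform P (pred_state Aq Bq h x0 U N - pred_ref Ad xr0 N)
  + \sum_(j < N) (qform Q (pred_state Aq Bq h x0 U j - pred_ref Ad xr0 j)
                  + qform Rw (U j)).

Definition mpc_optimal (n m N : nat) (Aq : 'M[R]_n) (Bq : 'M[R]_(n, m)) (h : R)
  (Ad P Q : 'M[R]_n) (Rw : 'M[R]_m) (x0 xr0 : 'cV[R]_n)
  (U : nat -> 'cV[R]_m) : Prop :=
  admissible N U /\
  forall V, admissible N V ->
    mpc_cost N Aq Bq h Ad P Q Rw x0 xr0 U <= mpc_cost N Aq Bq h Ad P Q Rw x0 xr0 V.

Definition qsmpc_closed_loop (n m N : nat) (H Aq : 'M[R]_n) (Bq : 'M[R]_(n, m))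
  (h : R) (P Q : 'M[R]_n) (Rw : 'M[R]_m)
  (xq xr : nat -> 'cV[R]_n) (u : nat -> 'cV[R]_m) : Prop :=
  forall k,
    xr k.+1 = expmx (h *: H) *m xr k /\
    xq k.+1 = Aq *m xq k + h *: (Bq *m u k) /\
    exists U, mpc_optimal N Aq Bq h (expmx (h *: H)) P Q Rw (xq k) (xr k) U
              /\ U 0%N = u k.

End Defs.

From HB Require Import structures.
From mathcomp Require Import all_boot all_order all_algebra.
From mathcomp Require Import all_classical all_reals all_analysis.
From mathcomp Require Import lra.
Import Order.TTheory GRing.Theory Num.Theory.
Import numFieldNormedType.Exports.
Local Open Scope ring_scope.
Local Open Scope classical_set_scope.

Set Implicit Arguments.
Unset Strict Implicit.

(* With A_q = e^{Hh} the prediction model and the reference share the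
   dynamics A.  Hence the optimal input sequence at time k, shifted by one
   step and padded with a zero input, is admissible at time k+1, and its cost
   differs from the optimal cost J_k only in the terminal terms; condition (b),
   A^T P A - P < -Q, turns this into J_{k+1} <= J_k - |e_k|_Q^2 for the
   tracking error e = x_q - x_ref.  Together with |e|_Q^2 <= J <= (N+1)|e|_P^2
   (the upper bound comes from the zero input) this bounds e_k by a multiple of
   e_0 and makes |e_k|_Q^2 summable.  The reference itself satisfies
   |A x|_P^2 <= |x|_P^2 - |x|_Q^2, again by (b).  Equivalence of the quadratic
   norms with the matrix norm then yields stability and convergence to 0. *)

Section QuadraticForms.
Variable R : realType.

Lemma qform0 n (M : 'M[R]_n) : qform M 0 = 0.
Proof. by rewrite /qform mulmx0 mxE. Qed.

Lemma qformZ n (M : 'M[R]_n) a (x : 'cV[R]_n) :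
  qform M (a *: x) = a ^+ 2 * qform M x.
Proof.
by rewrite /qform -scalemxAr linearZ /= -!scalemxAl scalerA mxE expr2.
Qed.

Lemma qformD n (M1 M2 : 'M[R]_n) (x : 'cV[R]_n) :
  qform (M1 + M2) x = qform M1 x + qform M2 x.
Proof. by rewrite /qform mulmxDr mulmxDl mxE. Qed.

Lemma qformN n (M : 'M[R]_n) (x : 'cV[R]_n) : qform (- M) x = - qform M x.
Proof. by rewrite /qform mulmxN mulNmx mxE. Qed.

Lemma qform_mulmx n (A M : 'M[R]_n) (x : 'cV[R]_n) :
  qform (A^T *m M *m A) x = qform M (A *m x).
Proof. by rewrite /qform trmx_mul !mulmxA. Qed.

Lemma posdef_qform_ge0 n (M : 'M[R]_n) (x : 'cV[R]_n) :
  posdef M -> 0 <= qform M x.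
Proof.
move=> [_ M_pos]; have [->|x_neq0] := eqVneq x 0; first by rewrite qform0.
exact/ltW/M_pos.
Qed.

Lemma continuous_qform_trmx n (M : 'M[R]_n) :
  continuous (fun y : 'rV[R]_n => qform M y^T).
Proof.
have qformE (y : 'rV[R]_n) :
    qform M y^T = \sum_j (\sum_i y 0 i * M i j) * y 0 j.
  rewrite /qform !mxE; apply: eq_bigr => j _; rewrite !mxE.
  by congr (_ * _); apply: eq_bigr => i _; rewrite !mxE.
rewrite (funext qformE).
apply: continuous_big => [|j _ y]; first exact: add_continuous.
apply: continuousM; last exact: coord_continuous.
apply: continuous_big => [|i _ z]; first exact: add_continuous.
by apply: continuousM; [exact: coord_continuous | exact: cst_continuous].
Qed.

Lemma normr_trmx_le p q (A : 'M[R]_(p, q)) : `|A^T| <= `|A|.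
Proof.
rewrite /Num.norm /= !mx_normrE.
apply: bigmax_le => [|ij _]; first by rewrite -mx_normrE; exact: (normr_ge0 A).
by rewrite mxE (le_bigmax _ _ (ij.2, ij.1)).
Qed.

Lemma normr_trmx p q (A : 'M[R]_(p, q)) : `|A^T| = `|A|.
Proof.
by apply/eqP; rewrite eq_le normr_trmx_le /= -{1}(trmxK A) normr_trmx_le.
Qed.

Lemma compact_unit_sphere n : compact [set y : 'rV[R]_n | `|y| = 1].
Proof.
apply: bounded_closed_compact.
  exists 1; split; first by rewrite realE ler01.
  by move=> r r_gt1 y /= ->; exact: ltW.
rewrite (_ : [set y | _] = (fun y : 'rV[R]_n => `|y|) @^-1` [set 1]) //.
by apply: preimage_closed; [move=> y _; exact: norm_continuous | exact: closed_eq].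
Qed.

Lemma normr_normalize n (x : 'cV[R]_n) : x != 0 -> `|(`|x|^-1 *: x)| = 1.
Proof. by move=> x_neq0; rewrite mx_normZ normfV normr_id mulVf ?normr_eq0. Qed.

Lemma qform_normalize n (M : 'M[R]_n) (x : 'cV[R]_n) :
  x != 0 -> qform M x = `|x| ^+ 2 * qform M (`|x|^-1 *: x).
Proof.
move=> x_neq0; rewrite qformZ mulrA -exprMn mulfV ?normr_eq0 //.
by rewrite expr1n mul1r.
Qed.

Lemma qform_extrema n (M : 'M[R]_n.+1) : exists ymin ymax : 'cV[R]_n.+1,
  [/\ `|ymin| = 1, `|ymax| = 1, forall x, `|x| ^+ 2 * qform M ymin <= qform M x
    & forall x, qform M x <= `|x| ^+ 2 * qform M ymax].
Proof.
pose S := [set y : 'rV[R]_n.+1 | `|y| = 1].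
have S_normalize x : x != 0 -> (`|x|^-1 *: x)^T \in S.
  by move=> x_neq0; rewrite inE /S /= normr_trmx normr_normalize.
have S_neq0 : S !=set0.
  pose e : 'cV[R]_n.+1 := const_mx 1.
  have e_neq0 : e != 0 by apply/eqP => /matrixP/(_ 0 0)/eqP; rewrite !mxE oner_eq0.
  by exists (`|e|^-1 *: e)^T; rewrite -inE S_normalize.
have qform_cont : {within S, continuous (fun y => qform M y^T)}.
  exact/continuous_subspaceT/continuous_qform_trmx.
have S_compact : compact S by exact: compact_unit_sphere.
have [ymin ymin_S minP] := compact_EVT_min S_neq0 S_compact qform_cont.
have [ymax ymax_S maxP] := compact_EVT_max S_neq0 S_compact qform_cont.
exists ymin^T, ymax^T; split.
- by rewrite normr_trmx; move: ymin_S; rewrite inE.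
- by rewrite normr_trmx; move: ymax_S; rewrite inE.
- move=> x; have [->|x_neq0] := eqVneq x 0.
    by rewrite qform0 normr0 expr0n /= mul0r.
  rewrite [qform M x]qform_normalize // ler_wpM2l ?exprn_ge0 //.
  by rewrite -[_ *: x]trmxK; apply: minP; rewrite S_normalize.
- move=> x; have [->|x_neq0] := eqVneq x 0.
    by rewrite qform0 normr0 expr0n /= mul0r.
  rewrite [qform M x]qform_normalize // ler_wpM2l ?exprn_ge0 //.
  by rewrite -[_ *: x]trmxK; apply: maxP; rewrite S_normalize.
Qed.

Lemma posdef_qform_ge n (M : 'M[R]_n) : posdef M ->
  exists2 c, 0 < c & forall x, c * `|x| ^+ 2 <= qform M x.
Proof.
case: n M => [|n] M posM.
  by exists 1 => // x; rewrite [x]flatmx0 qform0 normr0 expr0n /= mulr0.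
have [ymin [ymax [ymin_unit _ minP _]]] := qform_extrema M.
exists (qform M ymin); last by move=> x; rewrite mulrC.
by case: posM => _; apply; rewrite -normr_eq0 ymin_unit oner_neq0.
Qed.

Lemma posdef_qform_le n (M : 'M[R]_n) : posdef M ->
  exists2 C, 0 < C & forall x, qform M x <= C * `|x| ^+ 2.
Proof.
case: n M => [|n] M posM.
  by exists 1 => // x; rewrite [x]flatmx0 qform0 normr0 expr0n /= mulr0.
have [ymin [ymax [_ ymax_unit _ maxP]]] := qform_extrema M.
exists (qform M ymax); last by move=> x; rewrite mulrC.
by case: posM => _; apply; rewrite -normr_eq0 ymax_unit oner_neq0.
Qed.

End QuadraticForms.

Section LyapunovSequences.
Variable R : realType.

Lemma series_le_lyapunov (V a : R^nat) :
  (forall k, 0 <= V k) -> (forall k, V k.+1 <= V k - a k) ->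
  forall k, series a k <= V 0%N.
Proof.
move=> V_ge0 V_decr k.
suff : series a k <= V 0%N - V k by have := V_ge0 k; lra.
elim: k => [|k IHk]; first by rewrite /series /= big_geq // subrr.
by rewrite seriesSr; have := V_decr k; lra.
Qed.

Lemma le_series_succ (a : R^nat) :
  (forall k, 0 <= a k) -> forall k, a k <= series a k.+1.
Proof. by move=> a_ge0 k; rewrite seriesSr lerDr; apply: sumr_ge0. Qed.

Lemma normr_le_sqrt (c D x y : R) :
  0 < c -> c * x ^+ 2 <= D * y ^+ 2 -> `|x| <= Num.sqrt (D / c) * `|y|.
Proof.
move=> c_gt0 le_xy.
have Dy_ge0 : 0 <= y ^+ 2 * (D / c).
  rewrite mulrA divr_ge0 ?(ltW c_gt0) // mulrC.
  by apply: le_trans le_xy; rewrite mulr_ge0 ?sqr_ge0 ?(ltW c_gt0).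
rewrite mulrC -!sqrtr_sqr -sqrtrM ?sqr_ge0 // ler_sqrt //.
by rewrite mulrA ler_pdivlMr //; nra.
Qed.

Variable V : normedModType R.

Lemma norm_le_of_series (v : nat -> V) (a : R^nat) (c D : R) (w : V) :
  0 < c -> (forall k, c * `|v k| ^+ 2 <= a k) ->
  (forall k, series a k <= D * `|w| ^+ 2) ->
  forall k, `|v k| <= Num.sqrt (D / c) * `|w|.
Proof.
move=> c_gt0 v_le a_le k.
have a_ge0 j : 0 <= a j.
  by apply: le_trans (v_le j); rewrite mulr_ge0 ?sqr_ge0 ?(ltW c_gt0).
rewrite -[`|v k|]normr_id -[`|w|]normr_id; apply: normr_le_sqrt c_gt0 _.
exact: le_trans (v_le k) (le_trans (le_series_succ a_ge0 k) (a_le _)).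
Qed.

Lemma cvg0_of_series_le (v : nat -> V) (a : R^nat) (c B : R) :
  0 < c -> (forall k, c * `|v k| ^+ 2 <= a k) -> (forall k, series a k <= B) ->
  v @ \oo --> 0.
Proof.
move=> c_gt0 v_le a_le.
have a_ge0 j : 0 <= a j.
  by apply: le_trans (v_le j); rewrite mulr_ge0 ?sqr_ge0 ?(ltW c_gt0).
have a_cvg0 : a @ \oo --> 0.
  apply: cvg_series_cvg_0; apply: nondecreasing_is_cvgn.
    exact: (nondecreasing_series (P := xpredT) (m := 0%N) (fun k _ _ => a_ge0 k)).
  by exists B => _ [k _ <-].
apply/cvgr0Pnorm_lt => eps eps_gt0.
have ceps_gt0 : 0 < c * eps ^+ 2 by rewrite mulr_gt0 // exprn_gt0.
move/cvgr0Pnorm_lt : a_cvg0 => /(_ _ ceps_gt0); apply: filterS => k a_lt.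
have : c * `|v k| ^+ 2 < c * eps ^+ 2.
  exact: le_lt_trans (v_le k) (le_lt_trans (ler_norm _) a_lt).
by rewrite ltr_pM2l // => lt_sq; have := normr_ge0 (v k); nra.
Qed.

Lemma stable_of_norm_bounds (T : Type)
    (traj : (nat -> V) -> (nat -> V) -> T -> Prop) (K : R) :
  0 <= K ->
  (forall x y t, traj x y t -> forall k,
     `|x k - y k| <= K * `|x 0%N - y 0%N| /\ `|y k| <= K * `|y 0%N|) ->
  forall eps, 0 < eps -> exists2 delta, 0 < delta &
    forall x y t, traj x y t -> `|x 0%N| < delta -> `|y 0%N| < delta ->
      forall k, `|x k| < eps /\ `|y k| < eps.
Proof.
move=> K_ge0 bounds eps eps_gt0.
have K3_gt0 : 0 < 3 * K + 1 by lra.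
exists (eps / (3 * K + 1)) => [|x y t xy x0_lt y0_lt k]; first by rewrite divr_gt0.
set delta := eps / _ in x0_lt y0_lt.
have eps_eq : delta * (3 * K + 1) = eps by rewrite mulfVK ?lt0r_neq0.
have [e_le y_le] := bounds _ _ _ xy k.
have Kx : K * `|x 0%N| <= K * delta := ler_wpM2l K_ge0 (ltW x0_lt).
have Ky : K * `|y 0%N| <= K * delta := ler_wpM2l K_ge0 (ltW y0_lt).
have Kxy : K * `|x 0%N - y 0%N| <= K * `|x 0%N| + K * `|y 0%N|.
  by rewrite -mulrDr; exact: (ler_wpM2l K_ge0 (ler_normB _ _)).
have x_le : `|x k| <= `|x k - y k| + `|y k|.
  by rewrite -{1}(subrK (y k) (x k)) ler_normD.
have delta_gt0 : 0 < delta by apply: le_lt_trans x0_lt.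
have Kdelta : 3 * K * delta < eps by rewrite -eps_eq; nra.
split; nra.
Qed.

Lemma asymptotically_stable_of_series_le (T : Type)
    (traj : (nat -> V) -> (nat -> V) -> T -> Prop) (q : V -> R) (c D : R) :
  0 < c -> (forall x, c * `|x| ^+ 2 <= q x) ->
  (forall x y t, traj x y t ->
     (forall k, series (fun j => q (x j - y j)) k <= D * `|x 0%N - y 0%N| ^+ 2)
     /\ (forall k, series (fun j => q (y j)) k <= D * `|y 0%N| ^+ 2)) ->
  (forall eps, 0 < eps -> exists2 delta, 0 < delta &
     forall x y t, traj x y t -> `|x 0%N| < delta -> `|y 0%N| < delta ->
       forall k, `|x k| < eps /\ `|y k| < eps)
  /\ (forall x y t, traj x y t -> x @ \oo --> 0 /\ y @ \oo --> 0).
Proof.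
move=> c_gt0 q_ge series_le; split.
  apply: (stable_of_norm_bounds (sqrtr_ge0 (D / c))).
  move=> x y t /series_le[err_le ref_le] k.
  split; first exact: norm_le_of_series c_gt0 (fun j => q_ge (x j - y j)) err_le k.
  exact: norm_le_of_series c_gt0 (fun j => q_ge (y j)) ref_le k.
move=> x y t /series_le[err_le ref_le].
have err_cvg0 := cvg0_of_series_le c_gt0 (fun j => q_ge (x j - y j)) err_le.
have ref_cvg0 := cvg0_of_series_le c_gt0 (fun j => q_ge (y j)) ref_le.
split=> //; rewrite -[0]addr0 (_ : x = (fun k => x k - y k) + y); first exact: cvgD.
by apply/funext => k /=; rewrite subrK.
Qed.

End LyapunovSequences.

Section Predictions.
Variables (R : realType) (n m : nat) (A : 'M[R]_n) (B : 'M[R]_(n, m)) (h : R).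

Definition shift_input (N : nat) (U : nat -> 'cV[R]_m) (j : nat) : 'cV[R]_m :=
  if (j.+1 < N)%N then U j.+1 else 0.

Lemma admissible_zero N : admissible N (fun=> 0 : 'cV[R]_m).
Proof. by move=> j _ i; rewrite mxE !inE eqxx orbT. Qed.

Lemma admissible_shift N U : admissible N U -> admissible N (shift_input N U).
Proof.
move=> U_adm j j_lt; rewrite /shift_input; case: ifP => [j1_lt|_].
  exact: U_adm.
exact: (admissible_zero j_lt).
Qed.

Lemma pred_ref_succ (r0 : 'cV[R]_n) j :
  pred_ref A (A *m r0) j = pred_ref A r0 j.+1.
Proof. by elim: j => //= j ->. Qed.

Lemma pred_state_shift N x0 U j : (j < N)%N ->
  pred_state A B h (A *m x0 + h *: (B *m U 0%N)) (shift_input N U) j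
  = pred_state A B h x0 U j.+1.
Proof.
by elim: j => //= j IHj j_lt; rewrite IHj ?(ltnW j_lt) // /shift_input j_lt.
Qed.

Lemma pred_error_zero_input x0 r0 j :
  pred_state A B h x0 (fun=> 0) j - pred_ref A r0 j = A ^+ j *m (x0 - r0).
Proof.
elim: j => [|j IHj] /=; first by rewrite expr0 mul1mx.
by rewrite mulmx0 scaler0 addr0 -mulmxBr IHj exprS mulmxA.
Qed.

End Predictions.

Section DiscreteLyapunov.
Variables (R : realType) (n : nat) (A P Q : 'M[R]_n).
Hypothesis lyapPQ : negdef (Q - P + A^T *m P *m A).

Lemma qform_lyapunov x : qform P (A *m x) <= qform P x - qform Q x.
Proof.
have [->|x_neq0] := eqVneq x 0; first by rewrite mulmx0 !qform0 subr0.
by have := lyapPQ.2 x x_neq0; rewrite !qformD qformN qform_mulmx; lra.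
Qed.

Hypothesis posP : posdef P.
Hypothesis posQ : posdef Q.

Lemma qform_le_lyapunov x : qform Q x <= qform P x.
Proof.
by have := qform_lyapunov x; have := posdef_qform_ge0 (A *m x) posP; lra.
Qed.

Lemma qform_lyapunov_pow j x : qform P (A ^+ j *m x) <= qform P x.
Proof.
elim: j => [|j IHj]; first by rewrite expr0 mul1mx.
rewrite exprS -mulmxA; apply: le_trans (qform_lyapunov _) _.
by have := posdef_qform_ge0 (A ^+ j *m x) posQ; lra.
Qed.

Lemma series_qform_lyapunov (x : nat -> 'cV[R]_n) :
  (forall k, x k.+1 = A *m x k) ->
  forall k, series (fun j => qform Q (x j)) k <= qform P (x 0%N).
Proof.
move=> x_next.
apply: (@series_le_lyapunov _ (fun j => qform P (x j))) => k.
  exact: posdef_qform_ge0.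
by rewrite x_next qform_lyapunov.
Qed.

End DiscreteLyapunov.

Section RecedingHorizon.
Variables (R : realType) (n m : nat) (A : 'M[R]_n) (B : 'M[R]_(n, m)) (h : R).
Variables (P Q : 'M[R]_n) (Rw : 'M[R]_m).

Local Notation err x0 r0 U j := (pred_state A B h x0 U j - pred_ref A r0 j).

Lemma mpc_cost_shift N x0 r0 U :
  mpc_cost N.+1 A B h A P Q Rw (A *m x0 + h *: (B *m U 0%N)) (A *m r0)
      (shift_input N.+1 U)
    + qform Q (x0 - r0) + qform Rw (U 0%N) + qform P (err x0 r0 U N.+1)
  = mpc_cost N.+1 A B h A P Q Rw x0 r0 U
    + qform Q (err x0 r0 U N.+1) + qform P (A *m err x0 r0 U N.+1).
Proof.
set x1 := A *m x0 + _.
have shift_last : shift_input N.+1 U N = 0 by rewrite /shift_input ltnn.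
have err_succ j : (j < N.+1)%N ->
    err x1 (A *m r0) (shift_input N.+1 U) j = err x0 r0 U j.+1.
  by move=> j_lt; rewrite pred_state_shift // pred_ref_succ.
have err_last :
    err x1 (A *m r0) (shift_input N.+1 U) N.+1 = A *m err x0 r0 U N.+1.
  by rewrite [in LHS]/= shift_last mulmx0 scaler0 addr0 -mulmxBr err_succ.
have last_term : qform Q (err x1 (A *m r0) (shift_input N.+1 U) (@ord_max N))
    + qform Rw (shift_input N.+1 U (@ord_max N)) = qform Q (err x0 r0 U N.+1).
  by rewrite err_succ // shift_last qform0 addr0.
have first_term : qform Q (err x0 r0 U (@ord0 N)) + qform Rw (U (@ord0 N))
    = qform Q (x0 - r0) + qform Rw (U 0%N) by [].
rewrite /mpc_cost err_last big_ord_recr big_ord_recl last_term first_term.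
rewrite (eq_bigr (fun i : 'I_N => qform Q (err x0 r0 U (lift ord0 i))
                                  + qform Rw (U (lift ord0 i)))) => [|i _].
  set S := \sum_(i < N) _; set eN := err x0 r0 U N.+1; rewrite /=; lra.
rewrite err_succ; last exact: leqW (ltn_ord i).
by rewrite /shift_input /= ?ltnS ltn_ord.
Qed.

Variable N : nat.
Hypotheses (N_gt0 : (0 < N)%N) (posP : posdef P) (posQ : posdef Q).
Hypotheses (posRw : posdef Rw) (lyapPQ : negdef (Q - P + A^T *m P *m A)).

Local Notation J := (mpc_cost N A B h A P Q Rw).
Local Notation optimal := (mpc_optimal N A B h A P Q Rw).

Lemma mpc_cost_ge x0 r0 U : qform Q (x0 - r0) <= J x0 r0 U.
Proof.
rewrite /mpc_cost -(prednK N_gt0) big_ord_recl.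
have err0 : err x0 r0 U (@ord0 N.-1) = x0 - r0 by [].
rewrite err0; set S := \sum_(i < N.-1) _.
have S_ge0 : 0 <= S by apply: sumr_ge0 => i _; rewrite addr_ge0 ?posdef_qform_ge0.
have := posdef_qform_ge0 (U 0%N) posRw.
have := posdef_qform_ge0 (err x0 r0 U N.-1.+1) posP.
lra.
Qed.

Lemma optimal_cost_decrease x0 r0 U V :
  optimal x0 r0 U -> optimal (A *m x0 + h *: (B *m U 0%N)) (A *m r0) V ->
  J (A *m x0 + h *: (B *m U 0%N)) (A *m r0) V <= J x0 r0 U - qform Q (x0 - r0).
Proof.
move=> [U_adm _] [_ V_opt].
apply: le_trans (V_opt _ (admissible_shift U_adm)) _.
rewrite -(prednK N_gt0).
have := mpc_cost_shift N.-1 x0 r0 U.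
have := qform_lyapunov lyapPQ (err x0 r0 U N.-1.+1).
have := posdef_qform_ge0 (U 0%N) posRw.
lra.
Qed.

Lemma optimal_cost_le x0 r0 U :
  optimal x0 r0 U -> J x0 r0 U <= N.+1%:R * qform P (x0 - r0).
Proof.
move=> [_ U_opt]; apply: le_trans (U_opt _ (@admissible_zero R m N)) _.
rewrite /mpc_cost pred_error_zero_input.
under eq_bigr => j _ do rewrite pred_error_zero_input qform0 addr0.
rewrite -nat1r mulrDl mul1r lerD ?(qform_lyapunov_pow lyapPQ posQ) //.
apply: (@le_trans _ _ (\sum_(j < N) qform P (x0 - r0))).
  apply: ler_sum => j _; apply: le_trans (qform_le_lyapunov lyapPQ posP _) _.
  exact: (qform_lyapunov_pow lyapPQ posQ).
by rewrite sumr_const card_ord mulr_natl.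
Qed.

Lemma series_tracking_error_le (xq xr : nat -> 'cV[R]_n)
    (U : nat -> nat -> 'cV[R]_m) :
  (forall k, [/\ xr k.+1 = A *m xr k, xq k.+1 = A *m xq k + h *: (B *m U k 0%N)
    & optimal (xq k) (xr k) (U k)]) ->
  forall k, series (fun j => qform Q (xq j - xr j)) k
              <= N.+1%:R * qform P (xq 0%N - xr 0%N).
Proof.
move=> loop k; have [_ _ U0_opt] := loop 0%N.
apply: le_trans (optimal_cost_le U0_opt).
apply: (@series_le_lyapunov _ (fun j => J (xq j) (xr j) (U j))) => j.
  exact: le_trans (posdef_qform_ge0 _ posQ) (mpc_cost_ge _ _ _).
have [xr_next xq_next Uj_opt] := loop j; have [_ _ Uj1_opt] := loop j.+1.
rewrite xr_next xq_next in Uj1_opt *.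
exact: optimal_cost_decrease Uj_opt Uj1_opt.
Qed.

End RecedingHorizon.

Lemma qsmpc_closed_loop_optimal (R : realType) (n m N : nat) (H Aq : 'M[R]_n)
    (Bq : 'M[R]_(n, m)) (h : R) (P Q : 'M[R]_n) (Rw : 'M[R]_m)
    (xq xr : nat -> 'cV[R]_n) (u : nat -> 'cV[R]_m) :
  qsmpc_closed_loop N H Aq Bq h P Q Rw xq xr u -> Aq = expmx (h *: H) ->
  exists U : nat -> nat -> 'cV[R]_m, forall k,
    [/\ xr k.+1 = Aq *m xr k, xq k.+1 = Aq *m xq k + h *: (Bq *m U k 0%N)
      & mpc_optimal N Aq Bq h Aq P Q Rw (xq k) (xr k) (U k)].
Proof.
move=> loop Aq_exp.
have /choice[U UP] : forall k, exists V : nat -> 'cV[R]_m,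
    mpc_optimal N Aq Bq h Aq P Q Rw (xq k) (xr k) V /\ V 0%N = u k.
  by move=> k; have [_ [_]] := loop k; rewrite -Aq_exp.
exists U => k; have [xr_next [xq_next _]] := loop k; have [U_opt U0] := UP k.
by split=> //; rewrite ?U0 // Aq_exp.
Qed.

Lemma qsmpc_closed_loop_series_le (R : realType) (n m N : nat)
    (H Aq : 'M[R]_n) (Bq : 'M[R]_(n, m)) (h : R) (P Q : 'M[R]_n) (Rw : 'M[R]_m)
    (xq xr : nat -> 'cV[R]_n) (u : nat -> 'cV[R]_m) :
  (0 < N)%N -> posdef P -> posdef Q -> posdef Rw -> Aq = expmx (h *: H) ->
  negdef (Q - P + Aq^T *m P *m Aq) ->
  qsmpc_closed_loop N H Aq Bq h P Q Rw xq xr u ->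
  (forall k, series (fun j => qform Q (xq j - xr j)) k
               <= N.+1%:R * qform P (xq 0%N - xr 0%N))
  /\ (forall k, series (fun j => qform Q (xr j)) k <= qform P (xr 0%N)).
Proof.
move=> N_gt0 posP posQ posRw Aq_exp lyapPQ.
move=> /qsmpc_closed_loop_optimal /(_ Aq_exp) [U loop].
have xr_next k : xr k.+1 = Aq *m xr k by have [] := loop k.
split; first exact: (series_tracking_error_le N_gt0 posP posQ posRw lyapPQ loop).
exact: (series_qform_lyapunov lyapPQ posP xr_next).
Qed.

Theorem theorem1 (R : realType) (n m N : nat) (H : 'M[R]_n) (h : R)
  (Aq : 'M[R]_n) (Bq : 'M[R]_(n, m)) (P Q : 'M[R]_n) (Rw : 'M[R]_m) :
  hurwitz H -> 0 < h -> (1 <= N)%N ->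
  posdef P -> posdef Q -> posdef Rw ->
  Aq = expmx (h *: H) ->
  negdef (Q - P + Aq^T *m P *m Aq) ->
  (* Lyapunov stability of the origin of the closed loop (xq, xr) *)
  (forall eps : R, 0 < eps -> exists2 delta : R, 0 < delta &
     forall xq xr u, qsmpc_closed_loop N H Aq Bq h P Q Rw xq xr u ->
       `|xq 0%N| < delta -> `|xr 0%N| < delta ->
       forall k, `|xq k| < eps /\ `|xr k| < eps)
  /\
  (* attractivity: every closed-loop solution converges to the origin *)
  (forall xq xr u, qsmpc_closed_loop N H Aq Bq h P Q Rw xq xr u ->
     xq k @[k --> \oo] --> (0 : 'cV[R]_n) /\ xr k @[k --> \oo] --> (0 : 'cV[R]_n)).
Proof.
move=> _ _ N_gt0 posP posQ posRw Aq_exp lyapPQ.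
have [c c_gt0 Q_ge] := posdef_qform_ge posQ.
have [C C_gt0 P_le] := posdef_qform_le posP.
apply: (asymptotically_stable_of_series_le (D := N.+1%:R * C) c_gt0 Q_ge).
move=> xq xr u /(qsmpc_closed_loop_series_le N_gt0 posP posQ posRw Aq_exp lyapPQ).
case=> err_le ref_le; split=> k.
  by apply: le_trans (err_le k) _; rewrite -mulrA ler_wpM2l.
apply: le_trans (ref_le k) (le_trans (P_le _) _).
by rewrite -mulrA ler_peMl ?ler1n // mulr_ge0 ?sqr_ge0 ?ltW.
Qed.
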